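(* Let $k\in\mathbb C\setminus\mathbb Q$, let $n,m\in\mathbb Z_{>0}$, and let $p_0=n+k^{-1}m$. Two bipartitions $\alpha=(\lambda,\mu)$ and $\tilde\alpha=(\tilde\lambda,\tilde\mu)$ are $\mathcal E$-equivalent if and only if $$\alpha\setminus\pi=\tilde\alpha\setminus\pi$$ and $$\theta(\lambda\setminus\tilde\lambda)=\mu\setminus\tilde\mu,\qquad \theta(\tilde\lambda\setminus\lambda)=\tilde\mu\setminus\mu .$$
   Context: Partitions are identified with their Young diagrams, i.e. finite sets of boxes $(i,j)\in\mathbb Z_{>0}^2$ ($i$ = row, $j$ = column) closed under moving up or left. A bipartition is a pair $\alpha=(\lambda,\mu)$ of partitions; set-theoretic operations and inclusion of bipartitions are taken componentwise. The content of a box $x=(i,j)$ with parameter $a$ is $c(x,a)=(j-1)+k(i-1)+a$. For $r\ge1$ put $b_r(\alpha,k,p_0)=\sum_{x\in\lambda}c(x,0)^{r-1}+(-1)^r\sum_{y\in\mu}c(y,1+k-kp_0)^{r-1}$. Two bipartitions $\alpha,\tilde\alpha$ are called $\mathcal E$-equivalent (for the given $k,p_0$) if $b_r(\alpha,k,p_0)=b_r(\tilde\alpha,k,p_0)$ for all $r\ge1$. Let $\pi(n,m)=\{(i,j):1\le i\le n,\ 1\le j\le m\}$ be the rectangular diagram, $\pi=(\pi(n,m),\pi(n,m))$, and let $\theta:\pi(n,m)\to\pi(n,m)$ be the central symmetry $\theta(i,j)=(n-i+1,m-j+1)$. *)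

From HB Require Import structures.
From mathcomp Require Import all_boot all_order all_algebra.
From mathcomp Require Import finmap.
From mathcomp Require Import complex.
From mathcomp Require Import reals.
Set Implicit Arguments. Unset Strict Implicit. Unset Printing Implicit Defensive.
Import Order.TTheory GRing.Theory Num.Theory.
Local Open Scope fset_scope.
Local Open Scope ring_scope.

(* A box is (i,j) = (row, column), 1-indexed. A Young diagram is a finite set
   of boxes with positive coordinates closed under moving up or left. *)
Definition box := (nat * nat)%type.

Definition is_partition (l : {fset box}) : Prop :=
  forall x, x \in l ->
    [/\ (0 < x.1)%N, (0 < x.2)%N,
        ((1 < x.1)%N -> (x.1.-1, x.2) \in l) &
        ((1 < x.2)%N -> (x.1, x.2.-1) \in l)].

Definition is_bipartition (a : {fset box} * {fset box}) : Prop :=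
  is_partition a.1 /\ is_partition a.2.

Definition bip_diff (a b : {fset box} * {fset box}) :=
  (a.1 `\` b.1, a.2 `\` b.2).

Definition content (C : nzRingType) (k : C) (x : box) (a : C) : C :=
  (x.2.-1)%:R + k * (x.1.-1)%:R + a.

Definition b_r (C : nzRingType) (alpha : {fset box} * {fset box}) (k p0 : C)
  (r : nat) : C :=
  \sum_(x <- alpha.1) content k x 0 ^+ r.-1
  + (-1) ^+ r * \sum_(y <- alpha.2) content k y (1 + k - k * p0) ^+ r.-1.

Definition E_equiv (C : nzRingType) (k p0 : C)
  (alpha beta : {fset box} * {fset box}) : Prop :=
  forall r : nat, (0 < r)%N -> b_r alpha k p0 r = b_r beta k p0 r.

Definition rect (n m : nat) : {fset box} :=
  [fset x in [seq (i.+1, j.+1) | i <- iota 0 n, j <- iota 0 m]].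

Definition pi_bip (n m : nat) := (rect n m, rect n m).

Definition theta (n m : nat) (x : box) : box := ((n - x.1).+1, (m - x.2).+1).

Definition theta_img (n m : nat) (A : {fset box}) : {fset box} :=
  [fset theta n m x | x in A].

From mathcomp Require Import all_boot all_order all_algebra.
From mathcomp Require Import finmap.
From mathcomp Require Import complex.
From mathcomp Require Import reals.
From mathcomp Require Import zify ring.
Set Implicit Arguments. Unset Strict Implicit. Unset Printing Implicit Defensive.
Import GRing.Theory Num.Theory.
Local Open Scope fset_scope.
Local Open Scope ring_scope.

(* Write c(x) = (j-1) + k(i-1) for a box x = (i,j) of a lambda-component and
   c'(y) = -c(y, 1+k-kp0) = (m-j) + k(n-i) for a box y of a mu-component.
   Then b_(d+1)(alpha) is the difference of the d-th power sums of c(lambda)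
   and c'(mu), so alpha and alpha~ are E-equivalent iff the multisets
   c(lambda) + c'(mu~) and c(lambda~) + c'(mu) have equal power sums, i.e.
   coincide. As k is irrational, c and c' are injective on boxes, and
   c(x) = c'(y) exactly when x and y lie in pi(n,m) and y = theta(x). After
   cancelling the contributions of lambda /\ lambda~ and mu /\ mu~, each box x
   of lambda \ lambda~ must therefore be matched by the box theta(x) of
   mu \ mu~, and conversely. *)

(* Multiplying the power sums by the coefficients of a polynomial vanishing on
   every value except z isolates the multiplicity of z. *)
Lemma powersums_perm (F : numFieldType) (s t : seq F) :
  (forall d, \sum_(x <- s) x ^+ d = \sum_(x <- t) x ^+ d) -> perm_eq s t.
Proof.
move=> eq_pw; apply/allP => z _; apply/eqP.
pose P := \prod_(y <- undup (s ++ t) | y != z) ('X - y%:P).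
have eq_sums : \sum_(x <- s) P.[x] = \sum_(x <- t) P.[x].
  under eq_bigr do rewrite horner_coef.
  under [RHS]eq_bigr do rewrite horner_coef.
  rewrite exchange_big [RHS]exchange_big /=.
  by apply: eq_bigr => i _; rewrite -!mulr_sumr eq_pw.
have sumP u : {subset u <= undup (s ++ t)} ->
    \sum_(x <- u) P.[x] = (count_mem z u)%:R * P.[z].
  elim: u => [|a u IHu] sub_u; first by rewrite big_nil mul0r.
  rewrite big_cons /= IHu; last by move=> x ux; apply: sub_u; rewrite inE ux orbT.
  have [->|neq_az] := eqVneq a z; first by rewrite natrD mulrDl mul1r.
  suff -> : P.[a] = 0 by rewrite add0r.
  rewrite /P horner_prod; apply/eqP; rewrite prodf_seq_eq0; apply/hasP.
  exists a; first by apply: sub_u; exact: mem_head.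
  by rewrite hornerXsubC subrr eqxx andbT.
have Pz_neq0 : P.[z] != 0.
  rewrite /P horner_prod prodf_seq_neq0; apply/allP => y _; apply/implyP => neq_yz.
  by rewrite hornerXsubC subr_eq0 eq_sym.
rewrite !sumP in eq_sums; last 2 first.
- by move=> x tx; rewrite mem_undup mem_cat tx orbT.
- by move=> x sx; rewrite mem_undup mem_cat sx.
by apply/eqP; rewrite -(eqr_nat F); apply/eqP; exact: (mulIf Pz_neq0).
Qed.

Lemma perm_cat_uniq_mem (T : eqType) (s1 t1 s2 t2 : seq T) z :
  perm_eq (s1 ++ t1) (s2 ++ t2) -> uniq s1 -> uniq t2 ->
  z \in s1 -> z \notin s2 -> (z \in t2) && (z \notin t1).
Proof.
move=> /permP/(_ (pred1 z)) + u1 u2 z1 z2.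
rewrite !count_cat (count_uniq_mem _ u1) (count_uniq_mem _ u2) z1.
rewrite (count_memPn z2); case: (z \in t2) => //= count_z.
by apply/count_memPn; lia.
Qed.

Lemma perm_map_cat_match (T C : eqType) (f g : T -> C) (A A' B B' : seq T) :
  perm_eq (map f A ++ map g B') (map f A' ++ map g B) ->
  uniq A -> uniq B -> {in A ++ A' &, injective f} -> {in B &, injective g} ->
  forall x, x \in A -> x \notin A' ->
  exists2 y, (y \in B) && (y \notin B') & f x = g y.
Proof.
move=> perm_fg uA uB inj_f inj_g x Ax A'x.
have inj_fA : {in A &, injective f}.
  by apply: sub_in2 inj_f => y Ay; rewrite mem_cat Ay.
have /andP[] : (f x \in map g B) && (f x \notin map g B').
  apply: perm_cat_uniq_mem perm_fg _ _ _ _.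
  - by rewrite map_inj_in_uniq.
  - by rewrite map_inj_in_uniq.
  - exact: map_f.
  apply/mapP => -[x' A'x' eq_f]; move: A'x.
  by rewrite (inj_f x x') ?mem_cat ?Ax ?A'x' ?orbT.
move=> /mapP[y By ->] B'y; exists y => //; rewrite By /=.
by apply: contra B'y; exact: map_f.
Qed.

Lemma fsetDR_eqP (T : choiceType) (A B R : {fset T}) :
  A `\` R = B `\` R <-> {subset A `\` B <= R} /\ {subset B `\` A <= R}.
Proof.
have sub (X Y : {fset T}) : X `\` R = Y `\` R -> {subset X `\` Y <= R}.
  move=> eqXY x; rewrite in_fsetD => /andP[Yx Xx]; apply/negPn/negP => Rx.
  have : x \in X `\` R by rewrite in_fsetD Rx Xx.
  by rewrite eqXY in_fsetD (negbTE Yx) andbF.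
split=> [eqAB | [subAB subBA]]; first by split; apply: sub.
apply/fsetP => x; rewrite !in_fsetD.
case Ax: (x \in A); case Bx: (x \in B); rewrite ?andbT ?andbF //.
  by rewrite subAB // in_fsetD Ax Bx.
by rewrite subBA // in_fsetD Ax Bx.
Qed.

Lemma fsetID_sum (R : nmodType) (T : choiceType) (A B : {fset T}) (F : T -> R) :
  \sum_(x <- A) F x = \sum_(x <- A `&` B) F x + \sum_(x <- A `\` B) F x.
Proof.
by rewrite (big_fsetID _ (mem B)); congr (_ + _); apply: eq_fbigl => x;
  rewrite !inE // andbC.
Qed.

Definition positive_box : pred box := fun x => (0 < x.1)%N && (0 < x.2)%N.

Lemma partition_positive (l : {fset box}) :
  is_partition l -> {subset l <= positive_box}.
Proof. by move=> l_part x /l_part[x1_gt0 x2_gt0 _ _]; apply/andP. Qed.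

Lemma in_rect n m x : (x \in rect n m) = (0 < x.1 <= n)%N && (0 < x.2 <= m)%N.
Proof.
rewrite /rect inE; apply/allpairsP/idP => [[[i j] /= [ni mj ->]] | ].
  by move: ni mj; rewrite /= !mem_iota; lia.
case: x => a b /= ab_rect; exists (a.-1, b.-1); rewrite /= !mem_iota.
by split; [lia | lia | congr pair; lia].
Qed.

Lemma thetaK {n m : nat} : {in rect n m, involutive (theta n m)}.
Proof. by move=> [a b]; rewrite in_rect /theta /= => ab_rect; congr pair; lia. Qed.

Lemma big_theta_img (R : nmodType) n m (A : {fset box}) (G : box -> R) :
  {subset A <= rect n m} ->
  \sum_(y <- theta_img n m A) G y = \sum_(x <- A) G (theta n m x).
Proof.
move=> sub_A; rewrite big_imfset //= => x y Ax Ay eq_theta.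
by rewrite -(thetaK (sub_A x Ax)) eq_theta thetaK ?sub_A.
Qed.

Definition dual_content (C : nzRingType) (k p0 : C) (y : box) : C :=
  - content k y (1 + k - k * p0).

Lemma b_rS (C : nzRingType) (k p0 : C) alpha d :
  b_r alpha k p0 d.+1 = \sum_(x <- alpha.1) content k x 0 ^+ d
                        - \sum_(y <- alpha.2) dual_content k p0 y ^+ d.
Proof.
rewrite /b_r exprS mulN1r mulNr mulr_sumr; congr (_ - _).
by apply: eq_bigr => y _; rewrite /dual_content [RHS]exprNn.
Qed.

Lemma E_equivE (C : nzRingType) (k p0 : C) alpha beta :
  E_equiv k p0 alpha beta <->
  forall d, \sum_(x <- alpha.1) content k x 0 ^+ d
            + \sum_(y <- beta.2) dual_content k p0 y ^+ d
          = \sum_(x <- beta.1) content k x 0 ^+ d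
            + \sum_(y <- alpha.2) dual_content k p0 y ^+ d.
Proof.
have eq_sub (a1 a2 b1 b2 : C) : a1 - a2 = b1 - b2 <-> a1 + b2 = b1 + a2.
  split=> [eq_a | eq_b]; first by rewrite -(subrK a2 a1) eq_a addrAC subrK.
  by apply/(addIr a2); rewrite subrK addrAC -eq_b addrK.
split=> [eq_b d | eq_sums [//|d] _]; last by rewrite !b_rS; apply/eq_sub.
by apply/eq_sub; rewrite -!b_rS; apply: eq_b.
Qed.

Section RectangleContents.

Variables (C : numFieldType) (k : C) (n m : nat).
Hypothesis k_irr : forall q : rat, k <> ratr q.

Let p0 := n%:R + k^-1 * m%:R.

Lemma intr_comb_inj (a b c d : int) :
  a%:~R + k * b%:~R = c%:~R + k * d%:~R -> a = c /\ b = d.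
Proof.
move=> eq_comb; have [eq_bd|neq_bd] := eqVneq b d.
  by split=> //; move: eq_comb; rewrite eq_bd => /addIr /intr_inj.
exfalso; apply: (@k_irr ((c - a)%:~R / (b - d)%:~R)).
have bd_neq0 : (b - d)%:~R != 0 :> C by rewrite intr_eq0 subr_eq0.
rewrite fmorph_div !rmorph_int; apply: (mulIf bd_neq0); rewrite divfK //.
rewrite !intrB mulrBr; transitivity (a%:~R + k * b%:~R - a%:~R - k * d%:~R); first ring.
by rewrite eq_comb; ring.
Qed.

Lemma content0E x : positive_box x ->
  content k x 0 = (x.2%:Z - 1)%:~R + k * (x.1%:Z - 1)%:~R.
Proof.
case/andP=> x1_gt0 x2_gt0; rewrite /content addr0.
have -> : x.1%:Z - 1 = x.1.-1 by lia.
by have -> : x.2%:Z - 1 = x.2.-1 by lia.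
Qed.

Lemma dual_contentE y : positive_box y ->
  dual_content k p0 y = (m%:Z - y.2%:Z)%:~R + k * (n%:Z - y.1%:Z)%:~R.
Proof.
case/andP=> y1_gt0 y2_gt0.
have k_neq0 : k != 0 by apply/eqP => k0; apply: (@k_irr 0); rewrite k0 rmorph0.
rewrite /dual_content /content /p0 !intrB mulrDr mulrA mulfV // mul1r.
rewrite -[y.1 in RHS](prednK y1_gt0) -[y.2 in RHS](prednK y2_gt0).
by rewrite -!pmulrn -!(addn1 (_.-1)) !natrD; ring.
Qed.

Lemma content0_inj : {in positive_box &, injective (content k ^~ 0)}.
Proof.
move=> [x1 x2] [y1 y2] pos_x pos_y /=; rewrite !content0E //.
by case/intr_comb_inj => /= ? ?; congr pair; lia.
Qed.

Lemma dual_content_inj : {in positive_box &, injective (dual_content k p0)}.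
Proof.
move=> [x1 x2] [y1 y2] pos_x pos_y /=; rewrite !dual_contentE //.
by case/intr_comb_inj => /= ? ?; congr pair; lia.
Qed.

Lemma content0_eq_dual x y : positive_box x -> positive_box y ->
  content k x 0 = dual_content k p0 y ->
  [/\ x \in rect n m, y \in rect n m, y = theta n m x & x = theta n m y].
Proof.
move=> pos_x pos_y; rewrite content0E // dual_contentE //.
case/intr_comb_inj; move: pos_x pos_y; rewrite !in_rect /theta /positive_box.
case: x y => [x1 x2] [y1 y2] /= /andP[? ?] /andP[? ?] ? ?.
by split; [lia | lia | congr pair; lia | congr pair; lia].
Qed.

Lemma dual_content_theta x :
  x \in rect n m -> dual_content k p0 (theta n m x) = content k x 0.
Proof.
move=> x_rect; rewrite dual_contentE ?content0E //; move: x_rect; rewrite in_rect.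
- case: x => x1 x2 /= x_rect.
  have -> : m%:Z - (m - x2)%N.+1%:Z = x2%:Z - 1 by lia.
  by have -> : n%:Z - (n - x1)%N.+1%:Z = x1%:Z - 1 by lia.
- by case/and3P=> /andP[? _] ? _; apply/andP.
Qed.

Section Matching.

Variables lam mu lamt mut : {fset box}.
Hypotheses (lamP : {subset lam <= positive_box}) (muP : {subset mu <= positive_box}).
Hypotheses (lamtP : {subset lamt <= positive_box}) (mutP : {subset mut <= positive_box}).
Hypothesis contents_perm :
  perm_eq (map (content k ^~ 0) lam ++ map (dual_content k p0) mut)
          (map (content k ^~ 0) lamt ++ map (dual_content k p0) mu).

Lemma lam_diff_theta x :
  x \in lam `\` lamt -> x \in rect n m /\ theta n m x \in mu `\` mut.
Proof.
rewrite in_fsetD => /andP[lamt'x lam_x].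
have [|||y /andP[mu_y mut'y] eq_xy] := perm_map_cat_match contents_perm _ _ _
  (sub_in2 muP dual_content_inj) lam_x lamt'x; rewrite ?fset_uniq //.
  by apply: sub_in2 content0_inj => z; rewrite mem_cat => /orP[/lamP|/lamtP].
have [x_rect _ <- _] := content0_eq_dual (lamP lam_x) (muP mu_y) eq_xy.
by rewrite in_fsetD mu_y mut'y.
Qed.

Lemma mu_diff_theta y :
  y \in mu `\` mut -> y \in rect n m /\ theta n m y \in lam `\` lamt.
Proof.
rewrite in_fsetD => /andP[mut'y mu_y].
have perm_dual : perm_eq (map (dual_content k p0) mu ++ map (content k ^~ 0) lamt)
                         (map (dual_content k p0) mut ++ map (content k ^~ 0) lam).
  by rewrite perm_catC perm_sym perm_catC.
have [|||x /andP[lam_x lamt'x] eq_yx] := perm_map_cat_match perm_dual _ _ _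
  (sub_in2 lamP content0_inj) mu_y mut'y; rewrite ?fset_uniq //.
  by apply: sub_in2 dual_content_inj => z; rewrite mem_cat => /orP[/muP|/mutP].
have [_ y_rect _ <-] := content0_eq_dual (lamP lam_x) (muP mu_y) (esym eq_yx).
by rewrite in_fsetD lam_x lamt'x.
Qed.

Lemma theta_img_diff : theta_img n m (lam `\` lamt) = mu `\` mut.
Proof.
apply/fsetP => y; apply/imfsetP/idP => [[x /= /lam_diff_theta[_ ?] ->] //|].
by case/mu_diff_theta => y_rect theta_y; exists (theta n m y); rewrite ?thetaK.
Qed.

End Matching.

Lemma sum_dual_theta_img (A : {fset box}) d : {subset A <= rect n m} ->
  \sum_(y <- theta_img n m A) dual_content k p0 y ^+ d
  = \sum_(x <- A) content k x 0 ^+ d.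
Proof.
move=> sub_A; rewrite big_theta_img //.
by apply: eq_big_seq => x /sub_A x_rect; rewrite dual_content_theta.
Qed.

Lemma E_equiv_diff (lam mu lamt mut : {fset box}) :
  {subset lam <= positive_box} -> {subset mu <= positive_box} ->
  {subset lamt <= positive_box} -> {subset mut <= positive_box} ->
  E_equiv k p0 (lam, mu) (lamt, mut) ->
  [/\ bip_diff (lam, mu) (pi_bip n m) = bip_diff (lamt, mut) (pi_bip n m),
      theta_img n m (lam `\` lamt) = mu `\` mut &
      theta_img n m (lamt `\` lam) = mut `\` mu].
Proof.
move=> lamP muP lamtP mutP /E_equivE eq_sums.
have perm_contents : perm_eq (map (content k ^~ 0) lam ++ map (dual_content k p0) mut)
                    (map (content k ^~ 0) lamt ++ map (dual_content k p0) mu).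
  by apply: powersums_perm => d; rewrite !big_cat !big_map; exact: eq_sums.
have perm_contents' := perm_contents; rewrite perm_sym in perm_contents'.
split; [congr pair; apply/fsetDR_eqP; split | exact: theta_img_diff perm_contents
       | exact: theta_img_diff perm_contents'].
- by move=> x /(lam_diff_theta lamP muP lamtP perm_contents)[].
- by move=> x /(lam_diff_theta lamtP mutP lamP perm_contents')[].
- by move=> y /(mu_diff_theta lamP muP mutP perm_contents)[].
- by move=> y /(mu_diff_theta lamtP mutP muP perm_contents')[].
Qed.

Lemma diff_E_equiv (lam mu lamt mut : {fset box}) :
  [/\ bip_diff (lam, mu) (pi_bip n m) = bip_diff (lamt, mut) (pi_bip n m),
      theta_img n m (lam `\` lamt) = mu `\` mut &
      theta_img n m (lamt `\` lam) = mut `\` mu] ->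
  E_equiv k p0 (lam, mu) (lamt, mut).
Proof.
case=> [[/fsetDR_eqP[rect_lam rect_lamt] _] theta_lam theta_lamt].
apply/E_equivE => d /=.
rewrite (fsetID_sum lam lamt) (fsetID_sum lamt lam) (fsetID_sum mu mut).
rewrite (fsetID_sum mut mu) -theta_lam -theta_lamt !sum_dual_theta_img //.
by rewrite (fsetIC lamt lam) (fsetIC mut mu); ring.
Qed.

End RectangleContents.

Theorem mainTheorem1 (R : realType) (k : R[i]) (n m : nat)
  (hk : forall q : rat, k <> ratr q) (hn : (0 < n)%N) (hm : (0 < m)%N)
  (lam mu lamt mut : {fset box})
  (ha : is_bipartition (lam, mu)) (hat : is_bipartition (lamt, mut)) :
  let p0 := n%:R + k^-1 * m%:R in
  E_equiv k p0 (lam, mu) (lamt, mut) <->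
  [/\ bip_diff (lam, mu) (pi_bip n m) = bip_diff (lamt, mut) (pi_bip n m),
      theta_img n m (lam `\` lamt) = mu `\` mut &
      theta_img n m (lamt `\` lam) = mut `\` mu].
Proof.
move=> p0; case: ha hat => [/partition_positive lamP /partition_positive muP].
case=> [/partition_positive lamtP /partition_positive mutP].
split; [exact: (E_equiv_diff hk lamP muP lamtP mutP) | exact: (diff_E_equiv hk)].
Qed.
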